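(* Let $q\ge2$ be an integer, $d$ a positive integer and $F$ a finite field of characteristic $p$. Then the Char-$q$-$s$ network has a $d$-dimensional VLNC solution over $F$ with $s$-coefficient matrix $A_1\ne 0$ on $e_1$ if and only if $p$ divides $q$.
   Context: Vector linear network coding: each source $v$ generates $x_v\in F^d$; an edge out of a source $v$ carries $Ax_v$ for a $d\times d$ matrix $A$ over $F$; an edge out of an intermediate node carries $\sum A_{e',e}y_{e'}$ over the edges $e'$ entering that node; a terminal computes vectors $\sum B_ey_e$ over its incoming edges; a $d$-dimensional VLNC solution over $F$ is such a code with which every terminal computes each demanded message for all message choices. The Char-$q$-$s$ network (integer $q\ge2$): sources $s,x_1,\dots,x_{q+2}$; intermediate nodes $m_1,\dots,m_{q+3},n_1,\dots,n_{q+3}$; terminals $r_1,\dots,r_{q+3}$; edges: $(x_1,m_i)$ for $1\le i\le q+1$; $(s,m_1)$ and $(s,m_i)$ for $4\le i\le q+3$; $(x_i,m_j)$ for $2\le i,j\le q+2$, $i\ne j$; $(x_i,m_{q+3})$ for $1\le i\le q+2$; $e_i=(m_i,n_i)$ for $1\le i\le q+3$; $(n_i,r_i)$ for $1\le i\le q+2$; $(n_{q+3},r_i)$ and $(n_i,r_{q+3})$ for $1\le i\le q+2$; $(x_i,r_1)$ for $2\le i\le q+1$; $(x_1,r_{q+2})$; $(s,r_2)$; $(s,r_3)$. Demands: $r_1$ demands $x_{q+2}$; $r_i$ demands $x_i$ for $2\le i\le q+2$; $r_{q+3}$ demands $x_1$; no terminal demands $s$. In any $d$-dimensional VLNC over $F$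 the vector on $e_1$ has the form $y_{e_1}=M_1x_1+A_1s$ with $d\times d$ matrices $M_1,A_1$; $A_1$ is called the $s$-coefficient matrix on $e_1$. *)

From HB Require Import structures.
From mathcomp Require Import all_boot all_order all_algebra all_field.
Set Implicit Arguments. Unset Strict Implicit. Unset Printing Implicit Defensive.
Import GRing.Theory.
Local Open Scope ring_scope.

(* Nodes of the Char-q-s network (indices as in the paper, starting at 1). *)
Inductive node : Type :=
| Src_s
| Src_x of nat
| Mid_m of nat
| Mid_n of nat
| Term_r of nat.

Definition is_source (q : nat) (v : node) : bool :=
  match v with
  | Src_s => true
  | Src_x i => (1 <= i <= q.+2)%N
  | _ => false
  end.

Definition nodes (q : nat) : seq node :=
  Src_s :: map Src_x (iota 1 q.+2) ++ map Mid_m (iota 1 q.+3)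
        ++ map Mid_n (iota 1 q.+3) ++ map Term_r (iota 1 q.+3).

(* Edge relation of the Char-q-s network (no parallel edges, so an edge is
   determined by its tail and head). *)
Definition is_edge (q : nat) (u v : node) : bool :=
  match u, v with
  | Src_x i, Mid_m j =>
      [|| (i == 1)%N && (1 <= j <= q.+1)%N,
          [&& (2 <= i <= q.+2)%N, (2 <= j <= q.+2)%N & i != j]
        | (1 <= i <= q.+2)%N && (j == q.+3)%N]
  | Src_s, Mid_m j => (j == 1)%N || (4 <= j <= q.+3)%N
  | Mid_m i, Mid_n j => (i == j) && (1 <= i <= q.+3)%N
  | Mid_n i, Term_r j =>
      [|| (i == j) && (1 <= i <= q.+2)%N,
          (i == q.+3)%N && (1 <= j <= q.+2)%N
        | (1 <= i <= q.+2)%N && (j == q.+3)%N]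
  | Src_x i, Term_r j =>
      ((2 <= i <= q.+1)%N && (j == 1)%N) || ((i == 1)%N && (j == q.+2)%N)
  | Src_s, Term_r j => (j == 2)%N || (j == 3)%N
  | _, _ => false
  end.

Definition demand (q j : nat) : node :=
  if (j == 1)%N then Src_x q.+2
  else if (j == q.+3)%N then Src_x 1
  else Src_x j.

(* A d-dimensional vector linear network code over F.
   - src_coef v w : matrix A on the edge (v,w) out of a source v;
   - loc_coef u v w : local coefficient A_{(u,v),(v,w)} at intermediate node v;
   - dec_coef t u : decoding matrix B_{(u,t)} of terminal t. *)
Record vlnc (F : fieldType) (d : nat) := VLNC {
  src_coef : node -> node -> 'M[F]_d;
  loc_coef : node -> node -> node -> 'M[F]_d;
  dec_coef : node -> node -> 'M[F]_d }.

(* Vector y_(u,v) carried by edge (u,v), given messages msg (msg v = x_v for a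
   source v).  Computed with fuel k; fuel = number of nodes suffices since
   the network is acyclic. *)
Fixpoint edge_vec (F : fieldType) (d q : nat) (c : vlnc F d)
    (msg : node -> 'cV[F]_d) (k : nat) (u v : node) : 'cV[F]_d :=
  match k with
  | 0 => 0
  | k'.+1 =>
      if is_source q u then src_coef c u v *m msg u
      else \sum_(w <- nodes q | is_edge q w u)
             loc_coef c w u v *m edge_vec q c msg k' w u
  end.

Definition y_edge (F : fieldType) (d q : nat) (c : vlnc F d)
    (msg : node -> 'cV[F]_d) (u v : node) : 'cV[F]_d :=
  edge_vec q c msg (size (nodes q)) u v.

Definition term_out (F : fieldType) (d q : nat) (c : vlnc F d)
    (msg : node -> 'cV[F]_d) (t : node) : 'cV[F]_d :=
  \sum_(u <- nodes q | is_edge q u t) dec_coef c t u *m y_edge q c msg u t.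

Definition is_solution (F : fieldType) (d q : nat) (c : vlnc F d) : Prop :=
  forall msg : node -> 'cV[F]_d, forall j : nat, (1 <= j <= q.+3)%N ->
    term_out q c msg (Term_r j) = msg (demand q j).

(* s-coefficient matrix A_1 on e_1 = (m_1, n_1): the only s-contribution to
   y_{e_1} = M_1 x_1 + A_1 s comes through the edge (s, m_1). *)
Definition s_coef_e1 (F : fieldType) (d : nat) (c : vlnc F d) : 'M[F]_d :=
  loc_coef c Src_s (Mid_m 1) (Mid_n 1) *m src_coef c Src_s (Mid_m 1).

From HB Require Import structures.
From mathcomp Require Import all_boot all_order all_algebra all_field.
From mathcomp Require Import zify ring.
Set Implicit Arguments. Unset Strict Implicit. Unset Printing Implicit Defensive.
Import GRing.Theory.
Local Open Scope ring_scope.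

(* Since p is the characteristic of F, p divides q iff q = 0 in F; we show
   that a solution with A_1 <> 0 exists iff q = 0 in F.

   Sufficiency (q = 0 in F): take every coding matrix to be the identity and
   let r_{q+3} add its inputs while every other r_j subtracts all its inputs
   except the one from n_{q+3}.  Each r_j then recovers its demand, r_{q+3}
   because the middle e_i's contribute a multiple of q; and A_1 = 1.

   Necessity (q <> 0 in F): by linearity a solution satisfies one matrix
   equation per terminal and source.  They make the paths n_{q+3} -> r_j and
   n_j -> r_j invertible, so that the path n_j -> r_{q+3} acts through a
   "relay" matrix T_j on e_{q+3}.  Decoding at r_{q+3} then gives
   sum_{i <> k} T_i = 0 for all k in 2..q+2, and a leave-one-out argument
   over these q + 1 indices, using q <> 0, kills every T_i.  Finally x_1
   reaches r_{q+3} only through n_1, whose gain is thus invertible, and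
   cancelling s at r_{q+3} forces A_1 = 0. *)

Section SelectedSums.
Variable V : zmodType.
Implicit Types (s : seq nat) (P : pred nat) (G : nat -> V).

Lemma sum_sel_none s P G :
  {in s, forall i, P i = false} -> \sum_(i <- s | P i) G i = 0.
Proof. by move=> H; apply: big1_seq => i /andP[Pi /H]; rewrite Pi. Qed.

Lemma sum_sel_all s P G :
  {in s, forall i, P i} -> \sum_(i <- s | P i) G i = \sum_(i <- s) G i.
Proof. by move=> H; apply: big_rmcond_in => i /H ->. Qed.

Lemma sum_sel1 s P G a : uniq s -> a \in s ->
  {in s, forall i, P i = (i == a)} -> \sum_(i <- s | P i) G i = G a.
Proof.
move=> us sa H; rewrite big_seq_cond (eq_bigl (pred1 a)).
  by rewrite -big_filter filter_pred1_uniq // big_seq1.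
by move=> i /=; case: (boolP (i \in s)) => [/H|si] //; apply/esym/eqP => ia; rewrite ia sa in si.
Qed.

Lemma sum_sel2 s P G a b : uniq s -> a \in s -> b \in s -> a != b ->
  {in s, forall i, P i = (i == a) || (i == b)} -> \sum_(i <- s | P i) G i = G a + G b.
Proof.
move=> us sa sb ab H; rewrite (bigID (pred1 a)) /= (sum_sel1 _ us sa); last first.
  by move=> i /H ->; case: (i == a); rewrite ?andbF ?andbT ?orbT.
congr (_ + _); apply: sum_sel1 => // i /H ->.
by case: (eqVneq i a) => [->|] /=; rewrite ?andbT // (negbTE ab).
Qed.

Lemma sum_sel_but1 s P G a : uniq s -> a \in s ->
  {in s, forall i, P i = (i != a)} -> \sum_(i <- s | P i) G i = \sum_(i <- s) G i - G a.
Proof.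
move=> us sa H; rewrite [in RHS](bigD1_seq a) //= addrAC subrr add0r.
by rewrite big_seq_cond [RHS]big_seq_cond; apply: eq_bigl => i; case: (boolP (i \in s)) => //= /H.
Qed.

Lemma sum_iota_ends q P G : \sum_(k <- iota 1 q.+2 | P k) G k =
  (if P 1%N then G 1%N else 0) + \sum_(k <- iota 2 q | P k) G k
  + (if P q.+2 then G q.+2 else 0).
Proof.
have -> : iota 1 q.+2 = 1%N :: iota 2 q ++ [:: q.+2] by rewrite -[in LHS](addn1 q.+1) iotaD.
rewrite big_cons big_cat big_cons big_nil /=.
by case: (P 1%N); case: (P q.+2); rewrite ?addr0 ?add0r ?addrA.
Qed.

Lemma sum_iota_last q P G : \sum_(k <- iota 1 q.+3 | P k) G k =
  \sum_(k <- iota 1 q.+2 | P k) G k + (if P q.+3 then G q.+3 else 0).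
Proof.
have -> : iota 1 q.+3 = iota 1 q.+2 ++ [:: q.+3] by rewrite -[in LHS](addn1 q.+2) iotaD.
by rewrite big_cat big_cons big_nil /=; case: (P q.+3); rewrite ?addr0.
Qed.

Lemma sum_nodes q (P : pred node) (G : node -> V) :
  \sum_(w <- nodes q | P w) G w =
  (if P Src_s then G Src_s else 0) +
  (\sum_(i <- iota 1 q.+2 | P (Src_x i)) G (Src_x i) +
  (\sum_(i <- iota 1 q.+3 | P (Mid_m i)) G (Mid_m i) +
  (\sum_(i <- iota 1 q.+3 | P (Mid_n i)) G (Mid_n i) +
   \sum_(i <- iota 1 q.+3 | P (Term_r i)) G (Term_r i)))).
Proof. by rewrite /nodes big_cons !big_cat !big_map; case: (P Src_s); rewrite ?add0r. Qed.

End SelectedSums.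

(* Leave-one-out: if every sum of all but one of the T_i vanishes, then each
   T_i equals their total sum W, so W = n W for n the number of indices; when
   n - 1 is invertible in the scalars, W and hence every T_i vanish. *)
Lemma leave_one_out_zero (K : fieldType) (M : lmodType K) (r : seq nat) (T : nat -> M) :
  uniq r -> ((size r).-1%:R : K) != 0 ->
  {in r, forall k, \sum_(i <- r | i != k) T i = 0} -> {in r, forall k, T k = 0}.
Proof.
move=> ur nz H k kr; set W := \sum_(i <- r) T i.
have TW : {in r, forall i, T i = W} by move=> i ir; rewrite /W (bigD1_seq i) //= H ?addr0.
have WnW : W = W *+ size r.
  by rewrite {1}/W (eq_big_seq (fun=> W)) // big_const_seq count_predT iter_addr_0.
have : (size r).-1%:R *: W = 0.
  rewrite scaler_nat; apply: (addrI W); rewrite addr0 -mulrS prednK //.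
  by case: r kr {ur nz H TW WnW W}.
by rewrite TW // => /eqP; rewrite scaler_eq0 (negbTE nz) => /eqP.
Qed.

Lemma mx_ext_cV (F : fieldType) (d : nat) (A B : 'M[F]_d) :
  (forall z : 'cV[F]_d, A *m z = B *m z) -> A = B.
Proof.
move=> H; apply/matrixP => a b.
have := congr1 (fun M : 'cV[F]_d => M a 0) (H (delta_mx b 0)).
by rewrite -!colE !mxE.
Qed.

(* The number of nodes, used as evaluation fuel, exceeds the depth 3 of the
   network. *)
Lemma size_nodes q : size (nodes q) = (4 * q + 9).+3.
Proof. rewrite /nodes -cat1s !size_cat !size_map !size_iota /=; lia. Qed.

Section NetworkEvaluation.
Variables (F : fieldType) (d q : nat) (c : vlnc F d) (msg : node -> 'cV[F]_d).

Lemma edge_vec_S k u v : edge_vec q c msg k.+1 u v =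
  if is_source q u then src_coef c u v *m msg u
  else \sum_(w <- nodes q | is_edge q w u) loc_coef c w u v *m edge_vec q c msg k w u.
Proof. by []. Qed.

Lemma edge_into_mid_source w i : is_edge q w (Mid_m i) -> is_source q w.
Proof. case: w => //= k; lia. Qed.

(* The vector y_{e_i} carried by e_i = (m_i, n_i). *)
Definition e_vec i := \sum_(w <- nodes q | is_edge q w (Mid_m i))
   loc_coef c w (Mid_m i) (Mid_n i) *m (src_coef c w (Mid_m i) *m msg w).

Lemma edge_vec_out_n k i v : (1 <= i <= q.+3)%N ->
  edge_vec q c msg k.+3 (Mid_n i) v = loc_coef c (Mid_m i) (Mid_n i) v *m e_vec i.
Proof.
move=> Hi; rewrite edge_vec_S [is_source _ _]/= sum_nodes.
rewrite [\sum_(j <- _ | is_edge q (Mid_m j) _) _](sum_sel1 (a := i) _ (iota_uniq _ _)); first last.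
- by move=> j; rewrite mem_iota /= => Hj; lia.
- by rewrite mem_iota; lia.
rewrite !sum_sel_none // !add0r !addr0 edge_vec_S /=; congr (_ *m _).
by apply: eq_bigr => w /edge_into_mid_source ->.
Qed.

Lemma e_vec_sources i : e_vec i =
  (if is_edge q Src_s (Mid_m i) then
     loc_coef c Src_s (Mid_m i) (Mid_n i) *m (src_coef c Src_s (Mid_m i) *m msg Src_s) else 0) +
  \sum_(k <- iota 1 q.+2 | is_edge q (Src_x k) (Mid_m i))
     loc_coef c (Src_x k) (Mid_m i) (Mid_n i) *m (src_coef c (Src_x k) (Mid_m i) *m msg (Src_x k)).
Proof.
rewrite /e_vec sum_nodes; congr (_ + _).
by rewrite !(sum_sel_none (s := iota 1 q.+3)) // !addr0.
Qed.

Lemma term_out_split j : term_out q c msg (Term_r j) =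
  (if is_edge q Src_s (Term_r j) then
     dec_coef c (Term_r j) Src_s *m (src_coef c Src_s (Term_r j) *m msg Src_s) else 0) +
  (\sum_(k <- iota 1 q.+2 | is_edge q (Src_x k) (Term_r j))
     dec_coef c (Term_r j) (Src_x k) *m (src_coef c (Src_x k) (Term_r j) *m msg (Src_x k)) +
   \sum_(i <- iota 1 q.+3 | is_edge q (Mid_n i) (Term_r j))
     dec_coef c (Term_r j) (Mid_n i) *m (loc_coef c (Mid_m i) (Mid_n i) (Term_r j) *m e_vec i)).
Proof.
rewrite /term_out sum_nodes.
rewrite [\sum_(j <- _ | is_edge q (Mid_m j) _) _]sum_sel_none //.
rewrite [\sum_(j <- _ | is_edge q (Term_r j) _) _]sum_sel_none // add0r addr0.
rewrite /y_edge size_nodes; congr (_ + (_ + _)); apply: eq_bigr => i Hi.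
- by rewrite edge_vec_S (_ : is_source q (Src_x i)) //=; move: Hi => /=; lia.
- by rewrite edge_vec_out_n //; move: Hi => /=; lia.
Qed.

End NetworkEvaluation.

Lemma demand_mid q j : (2 <= j <= q.+2)%N -> demand q j = Src_x j.
Proof. by move=> Hj; rewrite /demand !ifF //; apply/eqP; lia. Qed.

Definition identity_code (F : fieldType) (d q : nat) : vlnc F d :=
  VLNC (fun _ _ => 1%:M) (fun _ _ _ => 1%:M)
    (fun t u => match t, u with
                | Term_r j, Mid_n i =>
                    if (j == q.+3) || (i == q.+3) then 1%:M else - 1%:M
                | Term_r j, _ => if j == q.+3 then 1%:M else - 1%:M
                | _, _ => 0 end).

Section IdentityCode.
Variables (F : fieldType) (d q : nat) (msg : node -> 'cV[F]_d).
Hypothesis hq : (2 <= q)%N.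
Let c := identity_code F d q.
Local Notation x k := (msg (Src_x k)).
Local Notation s := (msg Src_s).
Local Notation X := (\sum_(k <- iota 2 q) msg (Src_x k)).
Local Notation Y := (e_vec q c msg).

Lemma e_vec_id i : Y i = (if is_edge q Src_s (Mid_m i) then s else 0) +
  \sum_(k <- iota 1 q.+2 | is_edge q (Src_x k) (Mid_m i)) x k.
Proof.
rewrite e_vec_sources; congr (_ + _); first by case: ifP; rewrite ?mul1mx.
by apply: eq_bigr => k _; rewrite !mul1mx.
Qed.

Lemma e_vec_id_1 : Y 1%N = s + x 1%N.
Proof.
rewrite e_vec_id (sum_sel1 (a := 1%N) _ (iota_uniq _ _)) ?mem_iota //.
by move=> k; rewrite mem_iota /= => Hk; lia.
Qed.

Lemma e_vec_id_mid j : (2 <= j <= q.+1)%N ->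
  Y j = (if (4 <= j)%N then s else 0) + (x 1%N + (X - x j) + x q.+2).
Proof.
move=> Hj; rewrite e_vec_id (_ : is_edge q Src_s (Mid_m j) = (4 <= j)%N); last by rewrite /=; lia.
congr (_ + _); rewrite sum_iota_ends !ifT /=; try lia.
rewrite (sum_sel_but1 (a := j) _ (iota_uniq _ _)) ?mem_iota //.
by move=> k; rewrite mem_iota /= => Hk; lia.
Qed.

Lemma e_vec_id_q2 : Y q.+2 = s + X.
Proof.
rewrite e_vec_id ifT /=; last lia.
rewrite sum_iota_ends !ifF /=; try lia.
by rewrite sum_sel_all ?add0r ?addr0 // => k; rewrite mem_iota /= => Hk; lia.
Qed.

Lemma e_vec_id_q3 : Y q.+3 = s + (x 1%N + X + x q.+2).
Proof.
rewrite e_vec_id ifT /=; last lia.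
rewrite sum_iota_ends !ifT /=; try lia.
by rewrite sum_sel_all // => k; rewrite mem_iota /= => Hk; lia.
Qed.

Lemma dec_id_low j u : j != q.+3 -> (if u is Mid_n i then i != q.+3 else true) ->
  dec_coef c (Term_r j) u = - 1%:M.
Proof. by case: u => [|k|k|k|k] /= /negbTE -> // /negbTE ->. Qed.

Lemma dec_id_via_top j : dec_coef c (Term_r j) (Mid_n q.+3) = 1%:M.
Proof. by rewrite /= eqxx orbT. Qed.

Lemma dec_id_top u : dec_coef c (Term_r q.+3) u = 1%:M.
Proof. by case: u => * /=; rewrite eqxx. Qed.

Lemma out_id_low j : (1 <= j <= q.+2)%N -> term_out q c msg (Term_r j) =
  (if is_edge q Src_s (Term_r j) then - s else 0)
  - \sum_(k <- iota 1 q.+2 | is_edge q (Src_x k) (Term_r j)) x k - Y j + Y q.+3.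
Proof.
move=> Hj; have jn : j != q.+3 by apply/eqP; lia.
rewrite term_out_split (sum_sel2 (a := j) (b := q.+3) _ (iota_uniq 1 q.+3)) ?mem_iota; first last.
- by move=> i; rewrite mem_iota /= => Hi; lia.
- by apply/eqP; lia.
- lia.
- lia.
rewrite dec_id_via_top (dec_id_low (u := Mid_n j)) //.
rewrite (eq_bigr (fun k => - x k)) ?sumrN; last by move=> k _; rewrite dec_id_low ?jn // !mul1mx mulNmx mul1mx.
by case: ifP => _; rewrite ?dec_id_low ?jn // !mul1mx ?mulNmx ?mul1mx !addrA.
Qed.

Lemma out_id_1 : term_out q c msg (Term_r 1) = x q.+2.
Proof.
rewrite out_id_low // (_ : is_edge q Src_s (Term_r 1) = false) // sum_iota_ends.
rewrite (_ : is_edge q (Src_x 1) (Term_r 1) = false) //.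
rewrite (_ : is_edge q (Src_x q.+2) (Term_r 1) = false); last by rewrite /=; lia.
rewrite sum_sel_all; last by move=> k; rewrite mem_iota /= => Hk; lia.
rewrite e_vec_id_1 e_vec_id_q3; apply/matrixP => a b; rewrite !mxE; ring.
Qed.

Lemma out_id_mid j : (2 <= j <= q.+1)%N -> term_out q c msg (Term_r j) = x j.
Proof.
move=> Hj; rewrite out_id_low; last lia.
rewrite sum_sel_none; last by move=> k _ /=; lia.
rewrite e_vec_id_mid // e_vec_id_q3 (_ : is_edge q Src_s (Term_r j) = ~~ (4 <= j)%N) /=; last lia.
by case: (4 <= j)%N; apply/matrixP => a b; rewrite !mxE /=; ring.
Qed.

Lemma out_id_q2 : term_out q c msg (Term_r q.+2) = x q.+2.
Proof.
rewrite out_id_low; last lia.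
rewrite (_ : is_edge q Src_s (Term_r q.+2) = false); last by rewrite /=; lia.
rewrite sum_iota_ends (_ : is_edge q (Src_x 1) (Term_r q.+2)); last by rewrite /=; lia.
rewrite (_ : is_edge q (Src_x q.+2) (Term_r q.+2) = false); last by rewrite /=; lia.
rewrite sum_sel_none; last by move=> k; rewrite mem_iota /= => Hk; lia.
rewrite e_vec_id_q2 e_vec_id_q3; apply/matrixP => a b; rewrite !mxE; ring.
Qed.

Hypothesis hqF : (q%:R : F) = 0.

(* Since q = 0 in F, the vectors y_{e_2}, ..., y_{e_{q+1}} add up to
   - 2 s - X. *)
Lemma sum_e_vec_id_mid : \sum_(i <- iota 2 q) Y i = - (s + s) - X.
Proof.
set A := x 1%N + X + x q.+2.
have qA : A *+ q = 0 by rewrite -scaler_nat hqF scale0r.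
have qs : s *+ (q - 2) = - (s + s).
  by apply/eqP; rewrite -addr_eq0 -mulr2n -mulrnDr subnK // -scaler_nat hqF scale0r.
rewrite (eq_big_seq (fun i => (if (4 <= i)%N then s else 0) + (A - x i))); last first.
  move=> i; rewrite mem_iota => Hi; rewrite e_vec_id_mid; last lia.
  by rewrite /A; apply/matrixP => a b; rewrite !mxE; ring.
rewrite big_split /= sumrB big_const_seq count_predT iter_addr_0 size_iota qA add0r.
rewrite -[in iota 2 q](subnKC hq) iotaD big_cat !big_cons big_nil /= !add0r.
rewrite (eq_big_seq (fun _ => s)); last by move=> i; rewrite mem_iota => Hi; rewrite ifT //; lia.
by rewrite big_const_seq count_predT iter_addr_0 size_iota qs.
Qed.

Lemma out_id_q3 : term_out q c msg (Term_r q.+3) = x 1%N.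
Proof.
rewrite term_out_split (_ : is_edge q Src_s (Term_r q.+3) = false); last by rewrite /=; lia.
rewrite sum_sel_none; last by move=> k _ /=; lia.
rewrite sum_iota_last (_ : is_edge q (Mid_n q.+3) (Term_r q.+3) = false); last by rewrite /=; lia.
rewrite sum_sel_all; last by move=> k; rewrite mem_iota /= => Hk; lia.
rewrite (eq_bigr Y); last by move=> i _; rewrite dec_id_top !mul1mx.
rewrite sum_iota_ends e_vec_id_1 e_vec_id_q2 sum_e_vec_id_mid /=.
by apply/matrixP => a b; rewrite !mxE; ring.
Qed.

End IdentityCode.

Lemma identity_code_solution (F : fieldType) (d q : nat) :
  (2 <= q)%N -> (q%:R : F) = 0 -> is_solution q (identity_code F d q).
Proof.
move=> hq hqF msg j Hj.
have [->|j1] := eqVneq j 1%N; first exact: out_id_1.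
have [->|jt] := eqVneq j q.+3; first by rewrite out_id_q3 // /demand eqxx.
rewrite demand_mid; last lia.
have [->|jq] := eqVneq j q.+2; first exact: out_id_q2.
by apply: out_id_mid; lia.
Qed.

Lemma identity_code_s_coef_neq0 (F : fieldType) (d q : nat) :
  (0 < d)%N -> s_coef_e1 (identity_code F d q) != 0.
Proof. by case: d => // d _; rewrite /s_coef_e1 /= mul1mx matrix_nonzero1. Qed.

Section Necessity.
Variables (F : fieldType) (d q : nat) (c : vlnc F d).
Hypothesis hq : (2 <= q)%N.

Definition msg_x (k0 : nat) (z : 'cV[F]_d) : node -> 'cV[F]_d :=
  fun w => if w is Src_x k then (if k == k0 then z else 0) else 0.
Definition msg_s (z : 'cV[F]_d) : node -> 'cV[F]_d :=
  fun w => if w is Src_s then z else 0.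

(* Coefficients of x_k and of s in y_{e_i}; coef_s 1 is A_1. *)
Definition coef_x i k := if is_edge q (Src_x k) (Mid_m i) then
  loc_coef c (Src_x k) (Mid_m i) (Mid_n i) *m src_coef c (Src_x k) (Mid_m i) else 0.
Definition coef_s i := if is_edge q Src_s (Mid_m i) then
  loc_coef c Src_s (Mid_m i) (Mid_n i) *m src_coef c Src_s (Mid_m i) else 0.

Definition gain j i :=
  dec_coef c (Term_r j) (Mid_n i) *m loc_coef c (Mid_m i) (Mid_n i) (Term_r j).

Lemma e_vec_msg_x i k0 z : (1 <= k0 <= q.+2)%N -> e_vec q c (msg_x k0 z) i = coef_x i k0 *m z.
Proof.
move=> Hk; rewrite e_vec_sources (_ : (if _ then _ else _) = 0); last by case: ifP; rewrite ?mulmx0.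
rewrite add0r (eq_bigr (fun k => if k == k0 then
   loc_coef c (Src_x k) (Mid_m i) (Mid_n i) *m src_coef c (Src_x k) (Mid_m i) *m z else 0)); last first.
  by move=> k _ /=; case: (k == k0); rewrite ?mulmx0 ?mulmxA.
rewrite big_mkcond (bigD1_seq k0) ?iota_uniq ?mem_iota // eqxx big1 ?addr0.
  by rewrite /coef_x; case: ifP => _ /=; rewrite addr0 ?mul0mx.
by move=> k /negbTE ->; case: ifP.
Qed.

Lemma e_vec_msg_s i z : e_vec q c (msg_s z) i = coef_s i *m z.
Proof.
rewrite e_vec_sources big1 ?addr0; last by move=> k _; rewrite !mulmx0.
by rewrite /coef_s; case: ifP; rewrite ?mul0mx ?mulmxA.
Qed.

Lemma out_via_e_low j msg : (1 <= j <= q.+2)%N ->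
  \sum_(i <- iota 1 q.+3 | is_edge q (Mid_n i) (Term_r j))
     dec_coef c (Term_r j) (Mid_n i) *m (loc_coef c (Mid_m i) (Mid_n i) (Term_r j) *m e_vec q c msg i)
  = gain j j *m e_vec q c msg j + gain j q.+3 *m e_vec q c msg q.+3.
Proof.
move=> Hj; rewrite (sum_sel2 (a := j) (b := q.+3) _ (iota_uniq _ _)) ?mem_iota; first last.
- by move=> i; rewrite mem_iota /= => Hi; lia.
- by apply/eqP; lia.
- lia.
- lia.
by rewrite /gain !mulmxA.
Qed.

Lemma out_via_e_top msg :
  \sum_(i <- iota 1 q.+3 | is_edge q (Mid_n i) (Term_r q.+3))
     dec_coef c (Term_r q.+3) (Mid_n i) *m (loc_coef c (Mid_m i) (Mid_n i) (Term_r q.+3) *m e_vec q c msg i)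
  = \sum_(i <- iota 1 q.+2) gain q.+3 i *m e_vec q c msg i.
Proof.
rewrite sum_iota_last (_ : is_edge q (Mid_n q.+3) (Term_r q.+3) = false); last by rewrite /=; lia.
rewrite sum_sel_all; last by move=> k; rewrite mem_iota /= => Hk; lia.
by rewrite addr0; apply: eq_bigr => i _; rewrite /gain mulmxA.
Qed.

Hypothesis Hsol : is_solution q c.

Lemma decode_low_x j k : (2 <= j <= q.+2)%N -> (1 <= k <= q.+2)%N ->
  is_edge q (Src_x k) (Term_r j) = false ->
  gain j j *m coef_x j k + gain j q.+3 *m coef_x q.+3 k = if k == j then 1%:M else 0.
Proof.
move=> Hj Hk He; apply: mx_ext_cV => z; have Hj3 : (1 <= j <= q.+3)%N by lia.
have := Hsol (msg_x k z) Hj3; rewrite demand_mid // term_out_split out_via_e_low; last lia.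
rewrite (_ : (if _ then _ else _) = 0); last by case: ifP; rewrite ?mulmx0.
rewrite big1 => [|k' Hk']; last first.
  rewrite /msg_x; case: eqP => [e|_]; last by rewrite !mulmx0.
  by rewrite e He in Hk'.
rewrite !e_vec_msg_x // !add0r mulmxDl !mulmxA => ->.
by rewrite /msg_x eq_sym; case: ifP; rewrite ?mul1mx ?mul0mx.
Qed.

Lemma decode_low_s j : (4 <= j <= q.+2)%N ->
  gain j j *m coef_s j + gain j q.+3 *m coef_s q.+3 = 0.
Proof.
move=> Hj; apply: mx_ext_cV => z; have Hj3 : (1 <= j <= q.+3)%N by lia.
have := Hsol (msg_s z) Hj3; rewrite demand_mid; last lia.
rewrite term_out_split out_via_e_low; last lia.
rewrite (_ : is_edge q Src_s (Term_r j) = false); last by rewrite /=; lia.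
rewrite big1 => [|k' _]; last by rewrite !mulmx0.
by rewrite !e_vec_msg_s !add0r mulmxDl !mulmxA mul0mx.
Qed.

Lemma decode_top_x k : (1 <= k <= q.+2)%N ->
  \sum_(i <- iota 1 q.+2) gain q.+3 i *m coef_x i k = if k == 1%N then 1%:M else 0.
Proof.
move=> Hk; apply: mx_ext_cV => z; have Hj3 : (1 <= q.+3 <= q.+3)%N by lia.
have := Hsol (msg_x k z) Hj3; rewrite term_out_split out_via_e_top.
rewrite (_ : is_edge q Src_s (Term_r q.+3) = false); last by rewrite /=; lia.
rewrite sum_sel_none; last by move=> k' _ /=; lia.
rewrite mulmx_suml !add0r (eq_bigr (fun i => gain q.+3 i *m coef_x i k *m z)); last first.
  by move=> i _; rewrite e_vec_msg_x // mulmxA.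
by move=> ->; rewrite /demand eqxx /= eq_sym; case: ifP; rewrite ?mul1mx ?mul0mx.
Qed.

Lemma decode_top_s : \sum_(i <- iota 1 q.+2) gain q.+3 i *m coef_s i = 0.
Proof.
apply: mx_ext_cV => z; have Hj3 : (1 <= q.+3 <= q.+3)%N by lia.
have := Hsol (msg_s z) Hj3; rewrite term_out_split out_via_e_top.
rewrite (_ : is_edge q Src_s (Term_r q.+3) = false); last by rewrite /=; lia.
rewrite sum_sel_none; last by move=> k' _ /=; lia.
rewrite mulmx_suml !add0r (eq_bigr (fun i => gain q.+3 i *m coef_s i *m z)); last first.
  by move=> i _; rewrite e_vec_msg_s mulmxA.
by move=> ->; rewrite /demand eqxx /= mul0mx.
Qed.

Lemma coef_x_diag j : (2 <= j <= q.+2)%N -> coef_x j j = 0.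
Proof. by move=> Hj; rewrite /coef_x ifF //=; lia. Qed.

(* Decoding x_j at r_j goes through e_{q+3} alone, so the coefficient N_j of
   x_j on e_{q+3} and the gain Q_j of the path n_{q+3} -> r_j are invertible. *)
Lemma gain_top_coef_x j : (2 <= j <= q.+2)%N -> gain j q.+3 *m coef_x q.+3 j = 1%:M.
Proof.
move=> Hj; have Hj1 : (1 <= j <= q.+2)%N by lia.
have He : is_edge q (Src_x j) (Term_r j) = false by rewrite /=; lia.
by have := decode_low_x Hj Hj1 He; rewrite coef_x_diag // mulmx0 add0r eqxx.
Qed.

Lemma coef_x_top_unit k : (2 <= k <= q.+2)%N -> coef_x q.+3 k \in unitmx.
Proof. by move=> Hk; case: (mulmx1_unit (gain_top_coef_x Hk)). Qed.

Lemma gain_top_unit j : (2 <= j <= q.+2)%N -> gain j q.+3 \in unitmx.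
Proof. by move=> Hj; case: (mulmx1_unit (gain_top_coef_x Hj)). Qed.

(* Cancelling some x_k, k != j, at r_j then makes the gain of n_j -> r_j
   invertible. *)
Lemma gain_diag_unit j : (2 <= j <= q.+2)%N -> gain j j \in unitmx.
Proof.
move=> Hj; pose k := if j == 2%N then 3%N else 2%N.
have Hk : (2 <= k <= q.+2)%N by rewrite /k; case: ifP => _; lia.
have kj : (k == j) = false by rewrite /k; case: (eqVneq j 2%N) => [->|/negbTE] //; rewrite eq_sym.
have Hk1 : (1 <= k <= q.+2)%N by lia.
have He : is_edge q (Src_x k) (Term_r j) = false by rewrite /=; lia.
have /eqP := decode_low_x Hj Hk1 He; rewrite kj addr_eq0 => /eqP QN.
have : gain j j *m - coef_x j k \in unitmx.
  by rewrite mulmxN QN opprK unitmx_mul gain_top_unit ?coef_x_top_unit.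
by rewrite unitmx_mul => /andP[].
Qed.

(* The relay matrix T_j: whenever r_j cancels a message arriving with
   coefficients Y on e_j and N on e_{q+3}, the path n_j -> r_{q+3} applies
   T_j N to it. *)
Definition relay j := - (gain q.+3 j *m invmx (gain j j) *m gain j q.+3).

Lemma relay_eq j (Y N : 'M[F]_d) : (2 <= j <= q.+2)%N ->
  gain j j *m Y + gain j q.+3 *m N = 0 -> gain q.+3 j *m Y = relay j *m N.
Proof.
move=> Hj /eqP; rewrite addr_eq0 => /eqP PY.
by rewrite -[Y](mulKmx (gain_diag_unit Hj)) PY /relay !mulmxN mulNmx !mulmxA.
Qed.

Lemma relay_x j k : (2 <= j <= q.+2)%N -> (1 <= k <= q.+2)%N -> k != j ->
  is_edge q (Src_x k) (Term_r j) = false ->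
  gain q.+3 j *m coef_x j k = relay j *m coef_x q.+3 k.
Proof.
by move=> Hj Hk /negbTE kj He; apply: relay_eq => //; rewrite decode_low_x // kj.
Qed.

Hypothesis hqF : (q%:R : F) != 0.

(* Decoding at r_{q+3} leaves, for each k in 2..q+2, the equation
   (sum_{i != k} T_i) N_k = 0; leave-one-out then kills every relay. *)
Lemma relay_zero : {in iota 2 q.+1, forall j, relay j = 0}.
Proof.
apply: leave_one_out_zero => [|| k]; [exact: iota_uniq | by rewrite size_iota |].
rewrite mem_iota => Hk; have Hk1 : (1 <= k <= q.+2)%N by lia.
have Hk2 : (2 <= k <= q.+2)%N by lia.
have := decode_top_x Hk1; rewrite (_ : (k == 1%N) = false); last by apply/eqP; lia.
rewrite (_ : iota 1 q.+2 = 1%N :: iota 2 q.+1) // big_cons.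
rewrite (_ : coef_x 1 k = 0) ?mulmx0 ?add0r; last by rewrite /coef_x ifF //=; lia.
rewrite (eq_big_seq (fun i => if i != k then relay i *m coef_x q.+3 k else 0)).
  rewrite -big_mkcond -mulmx_suml => S0.
  by rewrite -[LHS](mulmxK (coef_x_top_unit Hk2)) S0 mul0mx.
move=> i; rewrite mem_iota => Hi; case: (eqVneq i k) => [->|ik] /=.
  by rewrite coef_x_diag ?mulmx0.
by apply: relay_x; rewrite 1?eq_sym //=; lia.
Qed.

(* With all relays zero, x_1 reaches r_{q+3} only through n_1. *)
Lemma gain_top_1_unit : gain q.+3 1 \in unitmx.
Proof.
have := decode_top_x (isT : (1 <= 1 <= q.+2)%N).
rewrite eqxx (_ : iota 1 q.+2 = 1%N :: iota 2 q.+1) // big_cons big1_seq ?addr0.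
  by case/mulmx1_unit.
move=> i /andP[_]; rewrite mem_iota => Hi.
have [Hiq | ->] : (i <= q.+1)%N \/ i = q.+2 by lia.
  by rewrite relay_x ?relay_zero ?mul0mx ?mem_iota //=; lia.
by rewrite /coef_x ifF ?mulmx0 //=; lia.
Qed.

(* Cancelling s at r_{q+3}: s does not enter m_2, m_3, and the vanishing
   relays kill its paths through n_4, ..., n_{q+2}; so the invertible path
   through n_1 must annihilate A_1. *)
Lemma s_coef_e1_zero : s_coef_e1 c = 0.
Proof.
change (coef_s 1 = 0).
have := decode_top_s.
rewrite (_ : iota 1 q.+2 = 1%N :: iota 2 q.+1) // big_cons big1_seq ?addr0.
  by move=> S0; rewrite -[coef_s 1](mulKmx gain_top_1_unit) S0 mulmx0.
move=> i /andP[_]; rewrite mem_iota => Hi.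
have [Hi3 | Hi4] : (i <= 3)%N \/ (4 <= i)%N by lia.
  by rewrite /coef_s ifF ?mulmx0 //=; lia.
rewrite (relay_eq (N := coef_s q.+3)) ?relay_zero ?mul0mx ?mem_iota ?decode_low_s //; lia.
Qed.

End Necessity.

Theorem lemma3 (F : finFieldType) (p : nat) (hp : p \in [pchar F])
    (q d : nat) (hq : (2 <= q)%N) (hd : (0 < d)%N) :
  (exists c : vlnc F d, is_solution q c /\ s_coef_e1 c != 0) <-> (p %| q)%N.
Proof.
rewrite (dvdn_pcharf hp); split.
- move=> [c [Hsol]]; apply: contraNT => hqF.
  by rewrite (s_coef_e1_zero hq Hsol hqF).
- move=> /eqP hqF; exists (identity_code F d q); split.
    exact: identity_code_solution.
  exact: identity_code_s_coef_neq0.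
Qed.
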